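(* Let $n,m\ge 3$ and let $G=P_n\square P_m$ be the grid graph. No minimal resolving set of $G$ contains three vertices that are on the same line.
   Context: The grid graph $P_n\square P_m$ has vertex set $\{(i,j):0\le i\le n-1,\ 0\le j\le m-1\}$, with $(i,j)$ adjacent to $(k,l)$ iff $|i-k|+|j-l|=1$; distance $d((i,j),(k,l))=|i-k|+|j-l|$. A vertex $w$ resolves $u,v$ if $d(w,u)\ne d(w,v)$; a set $R$ is resolving if every pair of distinct vertices is resolved by some vertex of $R$; a minimal resolving set is a resolving set $R$ such that no $R\setminus\{x\}$, $x\in R$, is resolving. Vertices are on the same line if they all share their first coordinate or all share their second coordinate. *)

From mathcomp Require Import all_boot.
Set Implicit Arguments. Unset Strict Implicit. Unset Printing Implicit Defensive.

Definition gvert (n m : nat) := ('I_n * 'I_m)%type.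

Definition absdiff (a b : nat) : nat := (a - b) + (b - a).

(* graph distance in the grid: |i-k| + |j-l| *)
Definition gdist n m (u v : gvert n m) : nat :=
  absdiff u.1 v.1 + absdiff u.2 v.2.

Definition resolves n m (w u v : gvert n m) : bool := gdist w u != gdist w v.

Definition resolving n m (R : {set gvert n m}) : bool :=
  [forall u, forall v, (u != v) ==> [exists w in R, resolves w u v]].

Definition minimal_resolving n m (R : {set gvert n m}) : bool :=
  resolving R && [forall x in R, ~~ resolving (R :\ x)].

Definition same_line n m (a b c : gvert n m) : bool :=
  ((a.1 == b.1) && (b.1 == c.1)) || ((a.2 == b.2) && (b.2 == c.2)).

From mathcomp Require Import all_boot zify.
Set Implicit Arguments. Unset Strict Implicit.

(* Along a line of the grid, w |-> d(w,u) - d(w,v) is a monotone function of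
   the varying coordinate.  Hence if b lies between a and c on a line, every
   pair resolved by b is already resolved by a or by c, so b can be removed
   from any resolving set containing a and c.  Of three distinct vertices on a
   line one lies between the other two, so such a set is never minimal. *)

Definition between (x y z : nat) : bool := (x <= y <= z) || (z <= y <= x).

Lemma between3 (x y z : nat) :
  x != y -> y != z -> x != z -> [|| between x y z, between y x z | between x z y].
Proof. rewrite /between; lia. Qed.

Lemma absdiff_between_eq (A B x y z p q : nat) : between x y z ->
  A + absdiff x p = B + absdiff x q -> A + absdiff z p = B + absdiff z q ->
  A + absdiff y p = B + absdiff y q.
Proof. by rewrite /between /absdiff; case: (leqP p q); lia. Qed.

Definition lies_between n m (a b c : gvert n m) : bool :=
  [&& a.1 == b.1, b.1 == c.1 & between a.2 b.2 c.2]
  || [&& a.2 == b.2, b.2 == c.2 & between a.1 b.1 c.1].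

Lemma resolves_between n m (a b c u v : gvert n m) :
  lies_between a b c -> resolves b u v -> resolves a u v || resolves c u v.
Proof.
rewrite /resolves /gdist => abc; apply: contraLR => /norP[/negPn/eqP Ha /negPn/eqP Hc].
apply/negPn/eqP.
case/orP: abc => /and3P[/eqP e1 /eqP e2 h]; rewrite e1 in Ha; rewrite -e2 in Hc.
- exact: absdiff_between_eq h Ha Hc.
- rewrite ![_ + absdiff b.2 _]addnC.
  rewrite ![_ + absdiff b.2 _]addnC in Ha Hc.
  exact: absdiff_between_eq h Ha Hc.
Qed.

Lemma resolving_delete_between n m (R : {set gvert n m}) (a b c : gvert n m) :
  resolving R -> a \in R -> c \in R -> a != b -> c != b -> lies_between a b c ->
  resolving (R :\ b).
Proof.
move=> /forallP HR aR cR ab cb abc.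
apply/forallP => u; apply/forallP => v; apply/implyP => uv.
have /existsP[w /andP[wR rw]] := implyP (forallP (HR u) v) uv.
apply/existsP; have [ewb|wb] := eqVneq w b.
- rewrite {}ewb in rw.
  by case/orP: (resolves_between abc rw) => r; [exists a | exists c];
    rewrite !inE ?ab ?aR ?cb ?cR r.
- by exists w; rewrite !inE wb wR rw.
Qed.

Lemma same_line_between n m (a b c : gvert n m) :
  [&& a != b, b != c & a != c] -> same_line a b c ->
  [|| lies_between a b c, lies_between b a c | lies_between a c b].
Proof.
case: a b c => [a1 a2] [b1 b2] [c1 c2].
rewrite /lies_between /same_line !xpair_eqE /= => /and3P[ab bc ac].
case/orP=> /andP[/eqP e1 /eqP e2]; subst; rewrite !eqxx ?andbT /= in ab bc ac *;
  by case/or3P: (between3 ab bc ac) => ->; rewrite ?orbT.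
Qed.

Theorem lemma5 (n m : nat) (hn : 3 <= n) (hm : 3 <= m)
    (R : {set gvert n m}) :
  minimal_resolving R ->
  ~ (exists a b c : gvert n m,
       [/\ a \in R, b \in R, c \in R,
           [&& a != b, b != c & a != c] & same_line a b c]).
Proof.
case/andP=> HR /forallP Hmin [a [b [c [aR bR cR dist sl]]]].
have irredundant x : x \in R -> ~ resolving (R :\ x).
  by move=> xR; move: (Hmin x); rewrite xR => /negP.
case/and3P: (dist) => ab bc ac.
case/or3P: (same_line_between dist sl) => h.
- by apply: (irredundant b bR); apply: resolving_delete_between HR aR cR ab _ h;
    rewrite eq_sym.
- by apply: (irredundant a aR); apply: resolving_delete_between HR bR cR _ _ h;
    rewrite eq_sym.
- exact: (irredundant c cR) (resolving_delete_between HR aR bR ac bc h).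
Qed.
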